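(* Let $R$ be a Noetherian ring, let $N\subsetneq M$ be finitely generated $R$-modules, and let $X=\{P_1,\dots,P_r\}\subseteq\operatorname{Ass}(M/N)=\{P_1,\dots,P_r,P_{r+1},\dots,P_s\}$ (the $P_i$ distinct). Then the following are equivalent: (1) the primary decompositions of $N$ in $M$ are independent over $X$; (2) for any $Q_i,Q_i'\in\Lambda_{P_i}(N\subsetneq M)$, $i=1,\dots,r$, one has $Q_1\cap\cdots\cap Q_r=Q_1'\cap\cdots\cap Q_r'$.
   Context: A submodule $Q\subseteq M$ is $P$-primary if $\operatorname{Ass}(M/Q)=\{P\}$. A primary decomposition of $N$ in $M$ means an irredundant and minimal primary decomposition $N=Q_1\cap\cdots\cap Q_s$ with $Q_i$ being $P_i$-primary, the $P_i$ distinct; $Q_i$ is then called a $P_i$-primary component of $N$ in $M$. For $P\in\operatorname{Ass}(M/N)$, $\Lambda_P(N\subsetneq M)$ is the set of all $P$-primary components of $N$ in $M$ (over all such primary decompositions). The primary decompositions of $N$ in $M$ are called independent over $X=\{P_1,\dots,P_r\}\subseteq \operatorname{Ass}(M/N)$ if for any two primary decompositions $N=Q_1\cap\cdots\cap Q_s=Q_1'\cap\cdots\cap Q_s'$ with $Q_i,Q_i'\in\Lambda_{P_i}(N\subsetneq M)$ for all $i$, one has $Q_1\cap\cdots\cap Q_r=Q_1'\cap\cdots\cap Q_r'$. *)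

From HB Require Import structures.
From mathcomp Require Import all_boot all_order all_algebra.
From mathcomp Require Import boolp classical_sets.
Set Implicit Arguments. Unset Strict Implicit. Unset Printing Implicit Defensive.
Import GRing.Theory.
Local Open Scope ring_scope.
Local Open Scope classical_set_scope.

Section Defs.
Variable R : comRingType.

Definition is_ideal (I : set R) : Prop :=
  I 0 /\ (forall a b, I a -> I b -> I (a + b)) /\ (forall a b, I b -> I (a * b)).

Definition is_prime_ideal (P : set R) : Prop :=
  is_ideal P /\ ~ P 1 /\ (forall a b, P (a * b) -> P a \/ P b).

Definition noetherian_ring : Prop :=
  forall I : nat -> set R, (forall n, is_ideal (I n)) ->
    (forall n, I n `<=` I n.+1) ->
    exists n0, forall m, (n0 <= m)%N -> I m = I n0.

Variable M : lmodType R.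

Definition is_submodule (N : set M) : Prop :=
  N 0 /\ (forall x y, N x -> N y -> N (x + y)) /\ (forall a x, N x -> N (a *: x)).

Definition fg_module : Prop :=
  exists (n : nat) (g : 'I_n -> M),
    forall m : M, exists a : 'I_n -> R, m = \sum_(i < n) a i *: g i.

Definition fg_submodule (N : set M) : Prop :=
  is_submodule N /\
  exists (n : nat) (g : 'I_n -> M), (forall i, N (g i)) /\
    forall m : M, N m -> exists a : 'I_n -> R, m = \sum_(i < n) a i *: g i.

(** (N :_R m) = annihilator of the class of m in M/N. *)
Definition colon (N : set M) (m : M) : set R := [set a | N (a *: m)].

(** Ass(M/N): primes of the form Ann_R(m + N). *)
Definition Ass (N : set M) : set (set R) :=
  [set P | is_prime_ideal P /\ exists m : M, P = colon N m].

Definition is_primary (P : set R) (Q : set M) : Prop :=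
  is_submodule Q /\ Ass Q = [set P].

Definition primary_decomposition (N : set M) (k : nat)
    (Q : 'I_k -> set M) (Pd : 'I_k -> set R) : Prop :=
  (forall i, is_primary (Pd i) (Q i)) /\
  injective Pd /\
  N = \bigcap_(i in [set: 'I_k]) Q i /\
  (forall j : 'I_k, \bigcap_(i in [set i | i != j]) Q i <> N).

Definition Lambda (P : set R) (N : set M) : set (set M) :=
  [set Q0 | exists (k : nat) (Q : 'I_k -> set M) (Pd : 'I_k -> set R) (j : 'I_k),
     primary_decomposition N Q Pd /\ Pd j = P /\ Q j = Q0].

Definition cap_first (s r : nat) (Q : 'I_s -> set M) : set M :=
  \bigcap_(i in [set i : 'I_s | (i < r)%N]) Q i.

(** Independence over X = {P_0, ..., P_(r-1)}, where Ass(M/N) = {P_0,...,P_(s-1)}. *)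
Definition independent_over (N : set M) (s r : nat) (P : 'I_s -> set R) : Prop :=
  forall Q Q' : 'I_s -> set M,
    (forall i, Lambda (P i) N (Q i)) -> (forall i, Lambda (P i) N (Q' i)) ->
    N = \bigcap_(i in [set: 'I_s]) Q i ->
    N = \bigcap_(i in [set: 'I_s]) Q' i ->
    cap_first r Q = cap_first r Q'.

End Defs.

(* Condition (2) quantifies over more families than (1), so (2) implies (1).
   Conversely, given components Q_1..Q_r, extend them by fixed components
   W_(r+1)..W_s of the remaining associated primes: these exist because every
   associated prime occurs in every primary decomposition.  Any such full
   choice intersects to N: if x lies in all the chosen components but not in
   N, Noetherianity gives a multiple a x whose annihilator modulo N is a
   maximal colon ideal, hence an associated prime P_i; but an associated prime
   colon N y is the prime of a component avoiding y, and the P_i-component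
   contains a x.  So (1) applies to the extended families. *)

From HB Require Import structures.
From mathcomp Require Import all_boot all_order all_algebra.
From mathcomp Require Import boolp classical_sets.
Import GRing.Theory.
Local Open Scope ring_scope.
Local Open Scope classical_set_scope.

Lemma noetherian_maximal (R : comRingType) (F : set (set R)) (I0 : set R) :
  noetherian_ring R -> (forall I, F I -> is_ideal I) -> F I0 ->
  exists2 I, F I & forall J, F J -> I `<=` J -> J `<=` I.
Proof.
move=> noeth F_ideal FI0; apply: contrapT => no_max.
have grow I : exists J, F I -> [/\ F J, I `<=` J & ~ J `<=` I].
  case: (pselect (F I)) => FI; last by exists I.
  apply: contrapT => no_succ; apply: no_max; exists I => // J FJ IJ.
  by apply: contrapT => JI; apply: no_succ; exists J.
have [g Hg] := choice grow.
pose chain n := iter n g I0.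
have F_chain n : F (chain n) by elim: n => [|n IH] //=; case: (Hg _ IH).
have [n0 stable] := noeth chain (fun n => F_ideal _ (F_chain n))
  (fun n => let: And3 _ h _ := Hg _ (F_chain n) in h).
case: (Hg _ (F_chain n0)) => _ _; apply.
by change (chain n0.+1 `<=` chain n0); rewrite stable.
Qed.

Section Colon.
Variables (R : comRingType) (M : lmodType R).
Implicit Types (N : set M) (x y : M).

Lemma colon_ideal N y : is_submodule N -> is_ideal (colon N y).
Proof.
move=> [N0 [ND NZ]]; split; [|split].
- by rewrite /colon /= scale0r.
- by move=> a b Ha Hb; rewrite /colon /= scalerDl; apply: ND.
- by move=> a b Hb; rewrite /colon /= -scalerA; apply: NZ.
Qed.

Lemma colon_scale N x b : is_submodule N -> colon N x `<=` colon N (b *: x).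
Proof.
move=> [_ [_ NZ]] d; rewrite /colon /= => Nd.
by rewrite scalerA mulrC -scalerA; apply: NZ.
Qed.

Lemma colon_scaleE N x b c : colon N (b *: x) c = colon N x (c * b).
Proof. by rewrite /colon /= scalerA. Qed.

Lemma maximal_colon_prime N x :
  is_submodule N -> ~ N x ->
  (forall b, ~ N (b *: x) -> colon N x `<=` colon N (b *: x) ->
     colon N (b *: x) `<=` colon N x) ->
  is_prime_ideal (colon N x).
Proof.
move=> subN Nx x_max; split; first exact: colon_ideal.
split; first by rewrite /colon /= scale1r.
move=> b c Nbc; case: (pselect (colon N x b)) => Nb; [by left | right].
by apply: (x_max b Nb (colon_scale _ _ _ subN)); rewrite colon_scaleE mulrC.
Qed.

Lemma exists_prime_colon N x :
  noetherian_ring R -> is_submodule N -> ~ N x ->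
  exists a, is_prime_ideal (colon N (a *: x)).
Proof.
move=> noeth subN Nx.
pose F := [set colon N (a *: x) | a in [set a | ~ N (a *: x)]].
have [_ [a Na <-] a_max] : exists2 I, F I & forall J, F J -> I `<=` J -> J `<=` I.
  apply: (@noetherian_maximal _ _ (colon N (1 *: x))) => //.
    by move=> _ [a _ <-]; apply: colon_ideal.
  by exists 1 => //=; rewrite scale1r.
exists a; apply: maximal_colon_prime => // b Nba sub.
rewrite scalerA in Nba sub *; apply: a_max => //; exists (b * a) => //.
Qed.

Lemma prime_prod_notin (P0 : set R) (I : finType) (f : I -> R) :
  is_prime_ideal P0 -> (forall i, ~ P0 (f i)) -> ~ P0 (\prod_i f i).
Proof.
move=> [_ [P1 Pp]] Hf; elim/big_rec: _ => [|i z _ Hz] //.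
by move=> /Pp [] //; apply: Hf.
Qed.

(* Otherwise every component D l is sent into by some multiple c_l y with c_l
   outside the prime (for D l y false this uses that D l is primary), and the
   product of the c_l sends y into N. *)
Lemma Ass_primary_decomposition N k (D : 'I_k -> set M) (Pd : 'I_k -> set R) y :
  primary_decomposition N D Pd -> is_prime_ideal (colon N y) ->
  exists l, ~ D l y /\ colon N y = Pd l.
Proof.
move=> [Dprim [_ [Ncap _]]] prime_y; apply: contrapT => no_l.
have outside l : exists c, ~ colon N y c /\ D l (c *: y).
  case: (pselect (D l y)) => Dy.
    by exists 1; split; [case: prime_y => _ [] | rewrite scale1r].
  apply: contrapT => no_c; apply: no_l; exists l; split => //.
  have colonE : colon (D l) y = colon N y.
    apply/seteqP; split => c; rewrite /colon /=.
      by move=> Dc; apply: contrapT => Nc; apply: no_c; exists c.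
    by rewrite Ncap; apply.
  have : Ass (D l) (colon N y) by split => //; exists y.
  by rewrite (Dprim l).2 => ->.
have [c Hc] := choice outside.
have : ~ colon N y (\prod_l c l).
  by apply: prime_prod_notin => // l; case: (Hc l).
apply; rewrite /colon /= Ncap => l _; rewrite (bigD1 l) //= mulrC -scalerA.
by case: (Dprim l).1 => _ [_ NZ]; apply: NZ; case: (Hc l).
Qed.

Arguments Ass_primary_decomposition {N k D Pd y}.

Lemma Lambda_sup (P0 : set R) N Q0 : Lambda P0 N Q0 -> N `<=` Q0.
Proof.
move=> [k [D [Pd [j [[_ [_ [-> _]]] [_ <-]]]]]] x; exact.
Qed.

Lemma Lambda_Ass (P0 : set R) N k (D : 'I_k -> set M) (Pd : 'I_k -> set R) :
  primary_decomposition N D Pd -> Ass N P0 -> exists Q0, Lambda P0 N Q0.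
Proof.
move=> dec [P0prime [y P0E]]; subst P0.
have [l [_ Pl]] := Ass_primary_decomposition dec P0prime.
by exists (D l), k, D, Pd, l.
Qed.

Lemma bigcap_Lambda N s (P : 'I_s -> set R) (Q : 'I_s -> set M) :
  noetherian_ring R -> is_submodule N ->
  (forall Pr, Ass N Pr -> exists i, P i = Pr) ->
  (forall i, Lambda (P i) N (Q i)) ->
  N = \bigcap_(i in [set: 'I_s]) Q i.
Proof.
move=> noeth subN AssP LQ; apply/seteqP; split.
  by move=> x Nx i _; apply: Lambda_sup (LQ i) _ Nx.
move=> x Qx; apply: contrapT => Nx.
have [a prime_ax] := exists_prime_colon _ _ noeth subN Nx.
have [i Pi] : exists i, P i = colon N (a *: x).
  by apply: AssP; split => //; exists (a *: x).
have [k [D [Pd [j [dec [Pj Dj]]]]]] := LQ i.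
have [l [Dl Pl]] := Ass_primary_decomposition dec prime_ax.
have lj : l = j by apply: dec.2.1; rewrite -Pl Pj.
apply: Dl; rewrite lj; case: (dec.1 j).1 => _ [_ NZ]; apply: NZ; rewrite Dj; exact: Qx.
Qed.

End Colon.

Lemma eq_cap_first (R : comRingType) (M : lmodType R) (s r : nat)
    (F G : 'I_s -> set M) :
  (forall i : 'I_s, (i < r)%N -> F i = G i) -> cap_first r F = cap_first r G.
Proof. by move=> FG; rewrite /cap_first; apply: eq_bigcapr => i /FG. Qed.

Theorem lemma2p1 (R : comRingType) (M : lmodType R) (N : set M)
    (s r : nat) (P : 'I_s -> set R) :
  noetherian_ring R ->
  fg_module M ->
  fg_submodule N ->
  N <> setT ->
  injective P ->
  (forall Pr : set R, Ass N Pr <-> exists i, P i = Pr) ->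
  (r <= s)%N ->
  (independent_over N r P <->
   (forall Q Q' : 'I_s -> set M,
      (forall i : 'I_s, (i < r)%N -> Lambda (P i) N (Q i)) ->
      (forall i : 'I_s, (i < r)%N -> Lambda (P i) N (Q' i)) ->
      cap_first r Q = cap_first r Q')).
Proof.
move=> noeth _ [subN _] _ _ AssP rs; split; last first.
  by move=> H Q Q' LQ LQ' _ _; apply: H => i _; [apply: LQ | apply: LQ'].
move=> indep Q Q' LQ LQ'.
case: (posnP r) => [r0 | r_gt0].
  by apply: eq_cap_first => i; rewrite r0.
have [k [D [Pd [_ [dec _]]]]] := LQ (Ordinal (leq_trans r_gt0 rs)) r_gt0.
have Lambda_P i : exists Z, Lambda (P i) N Z.
  by apply: Lambda_Ass dec _; apply/AssP; exists i.
have [W LW] := choice Lambda_P.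
pose extend (F : 'I_s -> set M) (i : 'I_s) := if (i < r)%N then F i else W i.
have Lextend F : (forall i : 'I_s, (i < r)%N -> Lambda (P i) N (F i)) ->
    forall i, Lambda (P i) N (extend F i).
  by move=> LF i; rewrite /extend; case: ifP => [/LF|_].
have extendE F : cap_first r (extend F) = cap_first r F.
  by apply: eq_cap_first => i ir; rewrite /extend ir.
have AssP' Pr : Ass N Pr -> exists i, P i = Pr by move/AssP.
have capN F : (forall i : 'I_s, (i < r)%N -> Lambda (P i) N (F i)) ->
    N = \bigcap_(i in [set: 'I_s]) extend F i.
  by move=> LF; apply: bigcap_Lambda noeth subN AssP' (Lextend F LF).
rewrite -extendE -(extendE Q').
by apply: indep; [apply: Lextend | apply: Lextend | apply: capN | apply: capN].
Qed.
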